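(* Let $X$ be a complex Banach space with open unit ball $B$ and let $Y$ be a closed subspace of $X$ with open unit ball $B_Y$. Then for every $f\in A_u(B)$, $$\widehat{f|_{B_Y}}\big(M_0(B_Y)\big)\subset \hat f\big(M_0(B)\big).$$
   Context: For a Banach space $Z$ with open unit ball $B_Z$, $A_u(B_Z)$ is the uniform algebra of bounded holomorphic functions on $B_Z$ that are uniformly continuous; $M_0(B_Z)$ is the set of nonzero multiplicative linear functionals $\tau$ on $A_u(B_Z)$ with $\tau(z^* )=0$ for every $z^*\in Z^*$; $\hat g(\tau)=\tau(g)$. *)

From Stdlib Require Import Reals.
Open Scope R_scope.

Definition Cpx : Type := (R * R)%type.
Definition C0 : Cpx := (0, 0).
Definition C1 : Cpx := (1, 0).
Definition Cadd (z w : Cpx) : Cpx := (fst z + fst w, snd z + snd w).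
Definition Copp (z : Cpx) : Cpx := (- fst z, - snd z).
Definition Cmul (z w : Cpx) : Cpx :=
  (fst z * fst w - snd z * snd w, fst z * snd w + snd z * fst w).
Definition Cabs (z : Cpx) : R := sqrt (fst z * fst z + snd z * snd z).
Definition Csub (z w : Cpx) : Cpx := Cadd z (Copp w).

Record CBanach := {
  car :> Type;
  vadd : car -> car -> car;
  vopp : car -> car;
  vzero : car;
  vscal : Cpx -> car -> car;
  vnorm : car -> R;
  vadd_assoc : forall x y z, vadd x (vadd y z) = vadd (vadd x y) z;
  vadd_comm : forall x y, vadd x y = vadd y x;
  vadd_0 : forall x, vadd x vzero = x;
  vadd_opp : forall x, vadd x (vopp x) = vzero;
  vscal_assoc : forall a b x, vscal a (vscal b x) = vscal (Cmul a b) x;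
  vscal_1 : forall x, vscal C1 x = x;
  vscal_distr_v : forall a x y, vscal a (vadd x y) = vadd (vscal a x) (vscal a y);
  vscal_distr_s : forall a b x, vscal (Cadd a b) x = vadd (vscal a x) (vscal b x);
  vnorm_nonneg : forall x, 0 <= vnorm x;
  vnorm_eq0 : forall x, vnorm x = 0 -> x = vzero;
  vnorm_triangle : forall x y, vnorm (vadd x y) <= vnorm x + vnorm y;
  vnorm_scal : forall a x, vnorm (vscal a x) = Cabs a * vnorm x;
  vcomplete : forall u : nat -> car,
    (forall eps, eps > 0 -> exists N, forall n m, (n >= N)%nat -> (m >= N)%nat ->
        vnorm (vadd (u n) (vopp (u m))) < eps) ->
    exists l, forall eps, eps > 0 -> exists N, forall n, (n >= N)%nat ->
        vnorm (vadd (u n) (vopp l)) < eps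
}.

Arguments vadd {c}. Arguments vopp {c}. Arguments vzero {c}.
Arguments vscal {c}. Arguments vnorm {c}.

Definition vsub {X : CBanach} (x y : X) : X := vadd x (vopp y).

Definition closed_subspace {X : CBanach} (Y : X -> Prop) : Prop :=
  Y vzero /\
  (forall x y, Y x -> Y y -> Y (vadd x y)) /\
  (forall a x, Y x -> Y (vscal a x)) /\
  (forall (u : nat -> X) (l : X), (forall n, Y (u n)) ->
     (forall eps, eps > 0 -> exists N, forall n, (n >= N)%nat -> vnorm (vsub (u n) l) < eps) ->
     Y l).

Definition fullspace (X : CBanach) : X -> Prop := fun _ => True.

Definition ball {X : CBanach} (Y : X -> Prop) : Type :=
  { x : X | Y x /\ vnorm x < 1 }.

(* A functional on Y is represented by a map X -> Cpx whose values on Y matter. *)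
Definition is_dual_on {X : CBanach} (Y : X -> Prop) (phi : X -> Cpx) : Prop :=
  (forall x y, Y x -> Y y -> phi (vadd x y) = Cadd (phi x) (phi y)) /\
  (forall a x, Y x -> phi (vscal a x) = Cmul a (phi x)) /\
  (exists M, forall y, Y y -> Cabs (phi y) <= M * vnorm y).

Definition bounded_fun {X : CBanach} {Y : X -> Prop} (g : ball Y -> Cpx) : Prop :=
  exists M, forall p, Cabs (g p) <= M.

Definition unif_cont {X : CBanach} {Y : X -> Prop} (g : ball Y -> Cpx) : Prop :=
  forall eps, eps > 0 -> exists delta, delta > 0 /\
    forall p q : ball Y, vnorm (vsub (proj1_sig p) (proj1_sig q)) < delta ->
      Cabs (Csub (g p) (g q)) < eps.

Definition holomorphic {X : CBanach} {Y : X -> Prop} (g : ball Y -> Cpx) : Prop :=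
  forall p : ball Y, exists L : X -> Cpx, is_dual_on Y L /\
    forall eps, eps > 0 -> exists delta, delta > 0 /\
      forall q : ball Y, vnorm (vsub (proj1_sig q) (proj1_sig p)) < delta ->
        Cabs (Csub (Csub (g q) (g p)) (L (vsub (proj1_sig q) (proj1_sig p))))
          <= eps * vnorm (vsub (proj1_sig q) (proj1_sig p)).

Definition in_Au {X : CBanach} (Y : X -> Prop) (g : ball Y -> Cpx) : Prop :=
  holomorphic g /\ bounded_fun g /\ unif_cont g.

Definition fadd {T : Type} (f g : T -> Cpx) : T -> Cpx := fun t => Cadd (f t) (g t).
Definition fmul {T : Type} (f g : T -> Cpx) : T -> Cpx := fun t => Cmul (f t) (g t).
Definition fscal {T : Type} (c : Cpx) (f : T -> Cpx) : T -> Cpx := fun t => Cmul c (f t).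

(* tau is a functional on A_u(B_Y); only its values on A_u(B_Y) are relevant *)
Definition in_M0 {X : CBanach} (Y : X -> Prop) (tau : (ball Y -> Cpx) -> Cpx) : Prop :=
  (forall f g, in_Au Y f -> in_Au Y g -> tau (fadd f g) = Cadd (tau f) (tau g)) /\
  (forall c f, in_Au Y f -> tau (fscal c f) = Cmul c (tau f)) /\
  (forall f g, in_Au Y f -> in_Au Y g -> tau (fmul f g) = Cmul (tau f) (tau g)) /\
  (exists f, in_Au Y f /\ tau f <> C0) /\
  (forall phi, is_dual_on Y phi -> tau (fun p : ball Y => phi (proj1_sig p)) = C0).

Definition ball_incl {X : CBanach} {Y : X -> Prop} (q : ball Y) : ball (fullspace X) :=
  exist _ (proj1_sig q) (conj I (proj2 (proj2_sig q))).

Definition restrict {X : CBanach} {Y : X -> Prop} (f : ball (fullspace X) -> Cpx)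
  : ball Y -> Cpx := fun q => f (ball_incl q).

(* Restriction R : A_u(B_X) -> A_u(B_Y), R f = f|_{B_Y}, is a
   unital algebra homomorphism.  Hence for tau in M_0(B_Y) the pull-back
   sigma = tau o R is again a multiplicative linear functional; it is nonzero
   because tau(1) = 1 for any nonzero character, and it vanishes on X^*
   because the restriction of a functional on X is a functional on Y.  By
   construction sigma(f) = tau(f|_{B_Y}), i.e. hat(f|_{B_Y})(tau) = hat f(sigma). *)
From Pilot Require Import Defs.
From Stdlib Require Import Reals Lra FunctionalExtensionality.
Open Scope R_scope.

Lemma Cabs_zero (z : Cpx) : fst z = 0 -> snd z = 0 -> Cabs z = 0.
Proof.
  intros Hre Him; unfold Cabs; rewrite Hre, Him.
  replace (0 * 0 + 0 * 0) with 0 by ring; apply sqrt_0.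
Qed.

Lemma fmul_one_r {T : Type} (g : T -> Cpx) : fmul g (fun _ => Defs.C1) = g.
Proof.
  apply functional_extensionality; intros t; unfold fmul, Cmul, Defs.C1.
  destruct (g t) as [a b]; simpl; f_equal; ring.
Qed.

Lemma dual_restrict {X : CBanach} (Y : X -> Prop) (phi : X -> Cpx) :
  is_dual_on (fullspace X) phi -> is_dual_on Y phi.
Proof.
  intros [Hadd [Hscal [K HK]]]; split; [|split].
  - intros x y _ _; apply Hadd; exact I.
  - intros a x _; apply Hscal; exact I.
  - exists K; intros y _; apply HK; exact I.
Qed.

Lemma restrict_Au {X : CBanach} (Y : X -> Prop) (f : ball (fullspace X) -> Cpx) :
  in_Au (fullspace X) f -> in_Au Y (restrict f).
Proof.
  intros [Hhol [[M HM] Hunif]]; split; [|split].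
  - intros p; destruct (Hhol (ball_incl p)) as [L [HL Hdiff]].
    exists L; split; [exact (dual_restrict Y L HL)|].
    intros eps Heps; destruct (Hdiff eps Heps) as [d [Hd Hclose]].
    exists d; split; [exact Hd|].
    intros q Hq; exact (Hclose (ball_incl q) Hq).
  - exists M; intros p; apply HM.
  - intros eps Heps; destruct (Hunif eps Heps) as [d [Hd Hclose]].
    exists d; split; [exact Hd|].
    intros p q Hpq; exact (Hclose (ball_incl p) (ball_incl q) Hpq).
Qed.

Lemma const_Au {X : CBanach} (Y : X -> Prop) (c : Cpx) :
  in_Au Y (fun _ => c).
Proof.
  split; [|split].
  - intros p; exists (fun _ => Defs.C0); split; [split; [|split]|].
    + intros; unfold Cadd, Defs.C0; simpl; f_equal; ring.
    + intros; unfold Cmul, Defs.C0; simpl; f_equal; ring.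
    + exists 0; intros y _; rewrite Cabs_zero by reflexivity; lra.
    + intros eps Heps; exists 1; split; [lra|]; intros q _.
      rewrite Cabs_zero by (simpl; ring).
      apply Rmult_le_pos; [lra | apply vnorm_nonneg].
  - exists (Cabs c); intros p; apply Rle_refl.
  - intros eps Heps; exists 1; split; [lra|]; intros p q _.
    rewrite Cabs_zero by (simpl; ring); lra.
Qed.

(* A nonzero multiplicative functional does not vanish at the unit:
   tau(g) = tau(g * 1) = tau(g) tau(1). *)
Lemma M0_unit_nonzero {X : CBanach} (Y : X -> Prop) (tau : (ball Y -> Cpx) -> Cpx) :
  in_M0 Y tau -> tau (fun _ => Defs.C1) <> Defs.C0.
Proof.
  intros [_ [_ [Hmul [[g [Hg Hg0]] _]]]] H1; apply Hg0.
  rewrite <- (fmul_one_r g), (Hmul g _ Hg (const_Au Y Defs.C1)), H1.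
  unfold Cmul, Defs.C0; simpl; f_equal; ring.
Qed.

Definition pullback {X : CBanach} {Y : X -> Prop}
  (tau : (ball Y -> Cpx) -> Cpx) : (ball (fullspace X) -> Cpx) -> Cpx :=
  fun h => tau (restrict h).

Lemma pullback_M0 {X : CBanach} (Y : X -> Prop) (tau : (ball Y -> Cpx) -> Cpx) :
  in_M0 Y tau -> in_M0 (fullspace X) (pullback tau).
Proof.
  intros Htau; pose proof (M0_unit_nonzero Y tau Htau) as Hunit.
  destruct Htau as [Hadd [Hscal [Hmul [_ Hdual]]]]; unfold pullback.
  split; [|split; [|split; [|split]]].
  - intros f g Hf Hg; exact (Hadd _ _ (restrict_Au Y f Hf) (restrict_Au Y g Hg)).
  - intros c f Hf; exact (Hscal c _ (restrict_Au Y f Hf)).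
  - intros f g Hf Hg; exact (Hmul _ _ (restrict_Au Y f Hf) (restrict_Au Y g Hg)).
  - exists (fun _ => Defs.C1); split; [apply const_Au | exact Hunit].
  - intros phi Hphi; exact (Hdual phi (dual_restrict Y phi Hphi)).
Qed.

Theorem proposition2p8 (X : CBanach) (Y : X -> Prop) (HY : closed_subspace Y)
  (f : ball (fullspace X) -> Cpx) (Hf : in_Au (fullspace X) f)
  (tau : (ball Y -> Cpx) -> Cpx) (Htau : in_M0 Y tau) :
  exists sigma : (ball (fullspace X) -> Cpx) -> Cpx,
    in_M0 (fullspace X) sigma /\ sigma f = tau (restrict f).
Proof.
  exists (pullback tau); split.
  - exact (pullback_M0 Y tau Htau).
  - reflexivity.
Qed.
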